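(* Let $M$ be a finitely generated $\mathbb{Z}$-module and let $z:M\to M$ be an automorphism. Suppose that there is a sequence of integers $r_i\to\infty$ and automorphisms $w_i:M\to M$ satisfying $w_i^{r_i}=z$. Then $z$ has finite order in $\operatorname{Aut} M$. *)

From HB Require Import structures.
From mathcomp Require Import all_boot all_order all_algebra.
Set Implicit Arguments. Unset Strict Implicit. Unset Printing Implicit Defensive.
Import Order.TTheory GRing.Theory Num.Theory.
Local Open Scope ring_scope.

Definition fin_gen_Zmod (M : zmodType) : Prop :=
  exists s : seq M, forall x : M,
    exists c : nat -> int, x = \sum_(i < size s) s`_i *~ c i.

Definition Zmod_aut (M : zmodType) (f : M -> M) : Prop :=
  {morph f : x y / x + y} /\ bijective f.

Definition tends_to_infty (r : nat -> nat) : Prop :=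
  forall N : nat, exists i0 : nat, forall i : nat, (i0 <= i)%N -> (N <= r i)%N.

(* Fix a free family [b] of [M] and [e > 0] with [e M] inside its span.  The
coordinates of [e x] in [b] turn each additive [f] into an integer matrix that
represents [e f]; for the matrices [Z] of [z] and [A i] of [w i] this gives
[e A_i^(r_i) = e^(r_i) Z].  So [e (a/e)^(r_i)] is an eigenvalue of [Z] whenever
[a] is one of [A i].  The eigenvalues of the [A i] are therefore bounded, their
integer characteristic polynomials lie in a finite set, and one of them, [p],
occurs for arbitrarily large [r i].  For a root [a] of [p] the numbers
[(a/e)^(r_i)] lie in the finite spectrum of [Z], so [a/e] is a root of unity.
Hence [A_i^m - e^m] is nilpotent for some [m > 0], and comparing
[Z^m = (e^m + Y)^(r_i) / e^(m (r_i - 1))] with its expansion in [Y] for large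
[r_i] forces [Z^m = e^m].  Then [z^m] is the identity modulo the [e]-torsion,
which is finite, so a further power of [z] is the identity. *)

From HB Require Import structures.
From mathcomp Require Import all_boot all_order all_algebra.
From mathcomp Require Import algC.
From mathcomp Require Import ring zify.
From Stdlib Require Import Classical.
Set Implicit Arguments. Unset Strict Implicit. Unset Printing Implicit Defensive.
Import Order.TTheory GRing.Theory Num.Theory.
Local Open Scope ring_scope.

Definition unbounded_on (P : nat -> Prop) (r : nat -> nat) : Prop :=
  forall N, exists2 i, P i & (N <= r i)%N.

Lemma unbounded_on_pigeonhole (T : eqType) (s : seq T) (f : nat -> T) P r :
  (forall i, P i -> f i \in s) -> unbounded_on P r ->
  exists2 t, t \in s & unbounded_on (fun i => P i /\ f i = t) r.
Proof.
elim: s P => [|a s IH] P fs Pr; first by have [i /fs] := Pr 0%N.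
have [Pa|/not_all_ex_not [N0 PaN0]] :=
  classic (unbounded_on (fun i => P i /\ f i = a) r).
  by exists a; rewrite ?mem_head.
have Ps : unbounded_on (fun i => P i /\ f i != a) r.
  move=> N; have [i Pi Ni] := Pr (maxn N N0).
  exists i; last exact: leq_trans (leq_maxl _ _) Ni.
  split=> //; apply/eqP => fia; apply: PaN0; exists i => //.
  exact: leq_trans (leq_maxr _ _) Ni.
have [|t st Pt] := IH _ _ Ps.
  by move=> i [/fs]; rewrite inE => /orP [/eqP ->|//]; rewrite eqxx.
exists t; first by rewrite inE st orbT.
by move=> N; have [i [[Pi _] fit] Ni] := Pt N; exists i.
Qed.

Lemma tends_to_infty_unbounded r :
  tends_to_infty r -> unbounded_on (fun i => 0 < r i)%N r.
Proof.
move=> r_infty N; have [i le_r] := r_infty (maxn N 1).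
by have := le_r i (leqnn i); rewrite geq_max => /andP [le_N le_1]; exists i.
Qed.

Lemma exprD_first_order (R : comNzRingType) (a x : R) r :
  exists g, a * (a + x) ^+ r = a ^+ r.+1 + x * (r%:R * a ^+ r + x * g).
Proof.
elim: r => [|r [g IH]]; first by exists 0; rewrite expr0 expr1 mul0r; ring.
exists (a * g + r%:R * a ^+ r + x * g).
by rewrite exprS mulrCA IH -natr1 !exprS; ring.
Qed.

Lemma expr_mul_shift (R : comNzRingType) (a x g : R) k :
  exists h, (x * (a + x * g)) ^+ k = a ^+ k * x ^+ k + x ^+ k.+1 * h.
Proof.
elim: k => [|k [h IH]]; first by exists 0; rewrite !expr0 mulr0 addr0 mulr1.
by exists (a ^+ k * g + h * (a + x * g)); rewrite exprS IH !exprS; ring.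
Qed.

Lemma norm_coef_prod_XsubC_le (R : numDomainType) (B : R) (s : seq R) k :
  0 <= B -> (forall a, a \in s -> `|a| <= B) ->
  `|(\prod_(a <- s) ('X - a%:P))`_k| <= (1 + B) ^+ size s.
Proof.
move=> B0; elim: s k => [|a s IH] k sB.
  by rewrite big_nil coefC expr0; case: (k == 0)%N; rewrite ?normr1 ?normr0.
have {}IH k' : `|(\prod_(b <- s) ('X - b%:P))`_k'| <= (1 + B) ^+ size s.
  by apply: IH => b bs; apply: sB; rewrite inE bs orbT.
rewrite big_cons mulrBl coefB coefXM coefCM exprS mulrDl mul1r.
apply: le_trans (ler_normB _ _) (lerD _ _).
  by case: (k == 0)%N; rewrite ?normr0 ?exprn_ge0 ?addr_ge0.
by rewrite normrM ler_pM // sB ?mem_head.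
Qed.

Lemma bounded_int_polys_finite n (K : nat) : exists s : seq {poly int},
  forall p : {poly int},
  (size p <= n.+1)%N -> (forall k, `|p`_k| <= K%:Z) -> p \in s.
Proof.
pose poly_of (c : {ffun 'I_n.+1 -> 'I_(K + K).+1}) : {poly int} :=
  \poly_(k < n.+1) ((c (inord k) : nat)%:Z - K%:Z).
exists (map poly_of (enum {ffun 'I_n.+1 -> 'I_(K + K).+1})) => p sz_p bd_p.
apply/mapP; exists [ffun k : 'I_n.+1 => inord (absz (p`_k + K%:Z))].
  by rewrite mem_enum.
apply/polyP => k; rewrite coef_poly; case: ltnP => kn; last first.
  by rewrite nth_default // (leq_trans sz_p kn).
have /andP [lo hi] : - K%:Z <= p`_k <= K%:Z by rewrite -ler_norml.
have pK : 0 <= p`_k + K%:Z by lia.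
have lt_pK : (absz (p`_k + K%:Z)%R < (K + K).+1)%N by rewrite -ltz_nat gez0_abs //; lia.
by rewrite ffunE !inordK // gez0_abs // addrK.
Qed.

Lemma expf_sub_eq1 (F : fieldType) (x : F) m n :
  x ^+ m != 0 -> (m <= n)%N -> x ^+ m = x ^+ n -> x ^+ (n - m) = 1.
Proof.
move=> xm_neq0 le_mn; rewrite -[in x ^+ n](subnKC le_mn) exprD -{1}[x ^+ m]mulr1.
by move/(mulfI xm_neq0)/esym.
Qed.

Lemma common_order (F : fieldType) (s : seq F) :
  (forall a, a \in s -> exists2 k, (0 < k)%N & a ^+ k = 1) ->
  exists2 m, (0 < m)%N & forall a, a \in s -> a ^+ m = 1.
Proof.
elim: s => [|b s IH] ord_s; first by exists 1%N.
have [k k_gt0 bk] := ord_s b (mem_head _ _).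
have [|m m_gt0 sm] := IH; first by move=> a sa; apply: ord_s; rewrite inE sa orbT.
exists (k * m)%N; first by rewrite muln_gt0 k_gt0.
move=> a; rewrite inE => /orP [/eqP ->|sa]; first by rewrite exprM bk expr1n.
by rewrite mulnC exprM sm ?expr1n.
Qed.

Lemma le_of_exprn_le (C : numDomainType) (x R : C) k :
  (0 < k)%N -> 0 <= x -> 1 <= R -> x ^+ k <= R -> x <= R.
Proof.
move=> k_gt0 x_ge0 R_ge1 xkR.
have [x_le1|x_gt1] := real_leP (ger0_real x_ge0) (@real1 C); first exact: le_trans R_ge1.
by apply: le_trans xkR; rewrite -[leLHS]expr1 ler_eXnr // ltW.
Qed.

Lemma eigenvalueX (F : fieldType) n (B : 'M[F]_n) a k :
  eigenvalue B a -> eigenvalue (B ^+ k) (a ^+ k).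
Proof.
case/eigenvalueP => v vB v_neq0; apply/eigenvalueP; exists v => //.
elim: k => [|k IH]; first by rewrite !expr0 mulmx1 scale1r.
by rewrite exprSr -mulmxE mulmxA IH -scalemxAl vB scalerA -exprSr.
Qed.

Lemma eigenvalueZ (F : fieldType) n (B : 'M[F]_n) a c :
  eigenvalue B a -> eigenvalue (c *: B) (c * a).
Proof.
case/eigenvalueP => v vB v_neq0; apply/eigenvalueP; exists v => //.
by rewrite -scalemxAr vB scalerA mulrC.
Qed.

Lemma eigenvalue_unitmx_neq0 (F : fieldType) n (B : 'M[F]_n) a :
  B \in unitmx -> eigenvalue B a -> a != 0.
Proof.
move=> B_unit /eigenvalueP [v vB]; apply: contraNneq => a0.
by rewrite -(mulmxK B_unit v) vB a0 scale0r mul0mx.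
Qed.

Lemma char_poly_split (F : closedFieldType) n (B : 'M[F]_n.+1) :
  exists2 rs : seq F, size rs = n.+1 & char_poly B = \prod_(a <- rs) ('X - a%:P).
Proof.
have [rs Brs] := closed_field_poly_normal (char_poly B).
rewrite (monicP (char_poly_monic B)) scale1r in Brs; exists rs => //.
by have := size_char_poly B; rewrite Brs size_prod_XsubC => -[].
Qed.

Lemma eigenvalue_bounded (C : numClosedFieldType) n (B : 'M[C]_n.+1) :
  exists2 R : C, 1 <= R & forall a, eigenvalue B a -> `|a| <= R.
Proof.
have [rs _ Brs] := char_poly_split B.
exists (1 + \sum_(x <- rs) `|x|); first by rewrite lerDl sumr_ge0.
move=> a; rewrite eigenvalue_root_char Brs root_prod_XsubC => a_rs.
by rewrite (big_rem a) //= addrCA lerDl addr_ge0 ?sumr_ge0.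
Qed.

Lemma prod_XsubC_dvdp_exp (F : fieldType) (q : {poly F}) (s : seq F) :
  (forall a, a \in s -> root q a) -> \prod_(a <- s) ('X - a%:P) %| q ^+ size s.
Proof.
elim: s => [|a s IH] qs; first by rewrite big_nil dvd1p.
rewrite big_cons exprS dvdp_mul ?dvdp_XsubCl ?qs ?mem_head //.
by apply: IH => b sb; rewrite qs // inE sb orbT.
Qed.

Lemma horner_mx_nilpotent (F : closedFieldType) n (B : 'M[F]_n.+1) (q : {poly F}) :
  (forall a, eigenvalue B a -> root q a) -> horner_mx B q ^+ n.+1 = 0.
Proof.
move=> eig_q; have [rs sz_rs Brs] := char_poly_split B.
rewrite -rmorphXn; have /dvdpP [q' ->] : char_poly B %| q ^+ n.+1.
  rewrite Brs -sz_rs prod_XsubC_dvdp_exp // => a a_rs.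
  by rewrite eig_q // eigenvalue_root_char Brs root_prod_XsubC.
by rewrite rmorphM /= Cayley_Hamilton mulr0.
Qed.

Lemma nilpotent_top_power (R : pzRingType) (Y : R) m :
  Y != 0 -> Y ^+ m = 0 -> exists k, [/\ (0 < k < m)%N, Y ^+ k != 0 & Y ^+ k.+1 = 0].
Proof.
move=> Y_neq0 Ym; have m_gt0 : (0 < m)%N.
  rewrite lt0n; apply: contraNneq Y_neq0 => m0.
  by rewrite -[Y]mulr1 -(expr0 Y) -m0 Ym mulr0.
have ex_k : exists k, Y ^+ k.+1 == 0 by exists m.-1; rewrite prednK // Ym.
case: (ex_minnP ex_k) => k /eqP Yk k_min.
have k_gt0 : (0 < k)%N.
  by rewrite lt0n; apply: contraNneq Y_neq0 => k0; rewrite -[Y]expr1 -k0 Yk.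
have le_k : (k <= m.-1)%N by apply: k_min; rewrite prednK // Ym.
exists k; split => //; first by rewrite k_gt0 (leq_ltn_trans le_k) // ltn_predL.
by move: k_gt0 k_min; case: k {Yk le_k} => // j _ k_min; apply/negP => /k_min; rewrite ltnn.
Qed.

(* With [Y := B - c], the binomial theorem gives [c^r (U - c) = Y (r c^r + Y g(Y))];
   at the top nonvanishing power of [Y] only the term [r c^r Y] survives. *)
Lemma sub_scalar_expr (R : idomainType) n (c : R) (B U : 'M[R]_n.+1) r k :
  c != 0 -> c *: B ^+ r = c ^+ r *: U -> (B - c%:M) ^+ k.+1 = 0 ->
  (U - c%:M) ^+ k = r%:R ^+ k *: (B - c%:M) ^+ k.
Proof.
move=> c_neq0 powB nilY; set Y := B - c%:M in nilY *.
have [g Hg] := exprD_first_order c%:P 'X r.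
set a := r%:R * c%:P ^+ r in Hg.
have [h Hh] := expr_mul_shift a 'X g k.
have hornerB : horner_mx Y (c%:P + 'X) = B.
  by rewrite rmorphD /= horner_mx_C horner_mx_X addrC subrK.
have HgY := congr1 (horner_mx Y) Hg.
rewrite rmorphM rmorphXn /= hornerB horner_mx_C -mulmxE mul_scalar_mx powB in HgY.
rewrite rmorphD rmorphXn /= horner_mx_C -(rmorphXn (@scalar_mx _ n.+1)) in HgY.
have eqY : c ^+ r *: (U - c%:M) = horner_mx Y ('X * (a + 'X * g)).
  by rewrite scalerBr scale_scalar_mx -exprSr HgY addrAC subrr add0r.
have hornera : horner_mx Y a = (r%:R * c ^+ r)%:M.
  by rewrite /a -polyC_natr -polyC_exp -polyCM horner_mx_C.
have := congr1 (fun M => M ^+ k) eqY.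
rewrite /= -rmorphXn Hh rmorphD !rmorphM !rmorphXn /= horner_mx_X nilY mul0r addr0.
rewrite hornera -(rmorphXn (@scalar_mx _ n.+1)) -mulmxE mul_scalar_mx.
rewrite exprZn exprMn mulrC -scalerA.
by move/(scalemx_inj (expf_neq0 k (expf_neq0 r c_neq0))).
Qed.

Lemma eq_scalar_of_unipotent_roots n (c : int) (U : 'M[int]_n.+1) : c != 0 ->
  (forall N, exists2 r, (N <= r)%N & exists2 B : 'M[int]_n.+1,
     (B - c%:M) ^+ n.+1 = 0 & c *: B ^+ r = c ^+ r *: U) ->
  U = c%:M.
Proof.
move=> c_neq0 roots; set D := U - c%:M.
pose bound := (\max_(k < n.+1) \max_(i < n.+1) \max_(j < n.+1) absz ((D ^+ k) i j))%N.
have [r lt_bound_r [B nilY powB]] := roots bound.+1.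
have [Y0|Y_neq0] := eqVneq (B - c%:M) 0.
  apply/eqP; rewrite -subr_eq0; apply/eqP; rewrite -[U - _]expr1.
  by rewrite (sub_scalar_expr c_neq0 powB) ?Y0 ?expr0n ?scaler0.
have [k [/andP [k_gt0 lt_kn] /matrix0Pn [i [j Yij]] Yk1]] :=
  nilpotent_top_power Y_neq0 nilY.
have : (absz ((D ^+ k) i j) <= bound)%N.
  apply: leq_trans (leq_bigmax (Ordinal lt_kn)); apply: leq_trans (leq_bigmax i) => /=.
  exact: (leq_bigmax j).
rewrite (sub_scalar_expr c_neq0 powB Yk1) mxE abszM abszX natz absz_nat.
have r_gt0 : (0 < r)%N by apply: leq_trans lt_bound_r.
have : (r <= r ^ k * absz (((B - c%:M) ^+ k) i j))%N.
  by rewrite (leq_trans _ (leq_pmulr _ _)) ?absz_gt0 // -{1}(expn1 r) leq_pexp2l.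
by move=> /(leq_trans lt_bound_r) lt_bound /(leq_trans lt_bound); rewrite ltnn.
Qed.

Section IntegerMatrixRoots.
Variables (n : nat) (Z : 'M[int]_n.+1) (A : nat -> 'M[int]_n.+1) (e : nat) (r : nat -> nat).
Hypotheses (e_gt0 : (0 < e)%N) (detZ : \det Z != 0).
Hypothesis powA : forall i, e%:R *: A i ^+ r i = (e ^ r i)%:R *: Z.
Hypothesis r_unbounded : unbounded_on (fun i => 0 < r i)%N r.

Local Notation toC := (map_mx (intr : int -> algC)).
Let eC : algC := e%:R.
Let eC_neq0 : eC != 0. Proof. by rewrite pnatr_eq0 -lt0n. Qed.

Lemma eigenvalue_Z_of_A i a :
  eigenvalue (toC (A i)) a -> eigenvalue (toC Z) (eC * (a / eC) ^+ r i).
Proof.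
move/(eigenvalueX (r i))/(eigenvalueZ (eC / eC ^+ r i)).
have -> : eC / eC ^+ r i * a ^+ r i = eC * (a / eC) ^+ r i.
  by rewrite expr_div_n; field; rewrite expf_neq0.
suff -> : toC Z = (eC / eC ^+ r i) *: toC (A i) ^+ r i by [].
have := congr1 toC (powA i); rewrite !map_mxZ rmorphXn /= !rmorph_nat natrX -/eC.
move/(congr1 ( *:%R (eC ^+ r i)^-1)); rewrite !scalerA mulVf ?expf_neq0 // scale1r.
by move=> <-; rewrite mulrC.
Qed.

Lemma eigenvalue_Z_neq0 l : eigenvalue (toC Z) l -> l != 0.
Proof.
apply: eigenvalue_unitmx_neq0.
by rewrite unitmxE det_map_mx unitfE intr_eq0.
Qed.

Lemma eigenvalue_A_bounded : exists2 R : algC, 0 <= R & forall i a,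
  (0 < r i)%N -> eigenvalue (toC (A i)) a -> `|a| <= eC * R.
Proof.
have [R R_ge1 RZ] := eigenvalue_bounded (toC Z).
exists R; first exact: le_trans R_ge1.
move=> i a ri /eigenvalue_Z_of_A /RZ; rewrite normrM normrX normr_nat -/eC => bound.
have eC_ge1 : 1 <= eC by rewrite ler1n.
have -> : `|a| = eC * `|a / eC| by rewrite normf_div normr_nat mulrC divfK.
rewrite ler_pM2l ?(lt_le_trans ltr01) //.
apply: le_of_exprn_le ri (normr_ge0 _) R_ge1 (le_trans _ bound).
by rewrite ler_peMl ?exprn_ge0.
Qed.

Lemma char_poly_A_finite :
  exists s : seq {poly int}, forall i, (0 < r i)%N -> char_poly (A i) \in s.
Proof.
have [R R_ge0 RA] := eigenvalue_A_bounded.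
have eR_ge0 : 0 <= eC * R by rewrite mulr_ge0 ?ler0n.
pose K := Num.Def.archi_bound ((1 + eC * R) ^+ n.+1).
have [s s_all] := bounded_int_polys_finite n.+1 K.
exists s => i ri; apply: s_all => [|k]; first by rewrite size_char_poly.
have [rs sz_rs Ars] := char_poly_split (toC (A i)).
have rs_bound a : a \in rs -> `|a| <= eC * R.
  by move=> a_rs; apply: RA ri _; rewrite eigenvalue_root_char Ars root_prod_XsubC.
have := norm_coef_prod_XsubC_le k eR_ge0 rs_bound.
rewrite -Ars -map_char_poly coef_map sz_rs /= -(ler_int algC) intr_norm => bound.
by apply/ltW/(le_lt_trans bound)/archi_boundP; rewrite exprn_ge0 ?addr_ge0.
Qed.

Lemma char_poly_A_frequent : exists p,
  unbounded_on (fun i => (0 < r i)%N /\ char_poly (A i) = p) r.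
Proof.
have [s s_all] := char_poly_A_finite.
by have [p _ p_freq] := unbounded_on_pigeonhole s_all r_unbounded; exists p.
Qed.

Lemma root_unity_ratio p :
  unbounded_on (fun i => (0 < r i)%N /\ char_poly (A i) = p) r ->
  forall a, root (map_poly intr p) a -> exists2 k, (0 < k)%N & (a / eC) ^+ k = 1.
Proof.
move=> p_freq a pa.
have eig_a i : char_poly (A i) = p -> eigenvalue (toC (A i)) a.
  by move=> Ap; rewrite eigenvalue_root_char -map_char_poly Ap.
have [rsZ _ Zrs] := char_poly_split (toC Z).
have rsZ_all i : (0 < r i)%N /\ char_poly (A i) = p -> eC * (a / eC) ^+ r i \in rsZ.
  by case=> _ /eig_a /eigenvalue_Z_of_A; rewrite eigenvalue_root_char Zrs root_prod_XsubC.
have [t _ t_freq] := unbounded_on_pigeonhole rsZ_all p_freq.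
have [i1 [[_ /eig_a /eigenvalue_Z_of_A /eigenvalue_Z_neq0 t1_neq0] t1] _] := t_freq 0%N.
have [i2 [_ t2] lt_r12] := t_freq (r i1).+1.
exists (r i2 - r i1)%N; first by rewrite subn_gt0.
apply: expf_sub_eq1 (ltnW lt_r12) _.
  by move: t1_neq0; rewrite mulf_eq0 negb_or => /andP [].
by apply: (mulfI eC_neq0); rewrite t1 t2.
Qed.

Lemma A_power_nilpotent p m :
  (forall a, root (map_poly intr p) a -> (a / eC) ^+ m = 1) ->
  forall i, char_poly (A i) = p -> (A i ^+ m - (e ^ m)%:R%:M) ^+ n.+1 = 0.
Proof.
move=> pm i Ap; set N := _ ^+ n.+1.
suff /matrixP toN0 : toC N = 0.
  by apply/matrixP => j k; have /eqP := toN0 j k; rewrite !mxE intr_eq0 => /eqP.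
rewrite rmorphXn rmorphB rmorphXn /= map_scalar_mx rmorph_nat.
have -> : toC (A i) ^+ m - (e ^ m)%:R%:M = horner_mx (toC (A i)) ('X^m - ((e ^ m)%:R)%:P).
  by rewrite rmorphB /= (rmorphXn (horner_mx (toC (A i)))) /= horner_mx_X horner_mx_C.
apply: horner_mx_nilpotent => a; rewrite eigenvalue_root_char -map_char_poly Ap => /pm am.
rewrite rootE hornerD hornerN hornerXn hornerC subr_eq0 natrX.
by rewrite -(divfK eC_neq0 a) exprMn am mul1r.
Qed.

Lemma Z_pow_scalar : exists2 m, (0 < m)%N & Z ^+ m = (e ^ m)%:R%:M.
Proof.
have [p p_freq] := char_poly_A_frequent.
have [i0 [_ A0] _] := p_freq 0%N.
have [rs _ Ars] := char_poly_split (toC (A i0)).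
have root_p a : root (map_poly intr p) a = (a \in rs).
  by rewrite -A0 map_char_poly Ars root_prod_XsubC.
have [|m m_gt0 rs_m] := @common_order _ [seq a / eC | a <- rs].
  by move=> _ /mapP [a a_rs ->]; apply: root_unity_ratio p_freq _ _; rewrite root_p.
exists m => //; apply: eq_scalar_of_unipotent_roots.
  by rewrite pnatr_eq0 -lt0n expn_gt0 e_gt0.
move=> N; have [i [_ Ap] le_N] := p_freq N; exists (r i) => //; exists (A i ^+ m).
  by apply: A_power_nilpotent Ap => a; rewrite root_p => a_rs; apply/rs_m/map_f.
by rewrite -exprM mulnC exprM natrX -exprZn powA exprZn -!natrX -!expnM mulnC.
Qed.

End IntegerMatrixRoots.

Lemma int_mx_root_scalar_power d (Z : 'M[int]_d) (A : nat -> 'M[int]_d) (e : nat)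
    (r : nat -> nat) :
  (0 < e)%N -> \det Z != 0 -> (forall i, e%:R *: A i ^+ r i = (e ^ r i)%:R *: Z) ->
  unbounded_on (fun i => 0 < r i)%N r -> exists2 m, (0 < m)%N & Z ^+ m = (e ^ m)%:R%:M.
Proof.
case: d Z A => [|n] Z A e_gt0 detZ powA r_unbounded; last exact: Z_pow_scalar.
by exists 1%N => //; apply/matrixP => [[]].
Qed.

Lemma morph_addB (M : zmodType) (f : M -> M) :
  {morph f : x y / x + y} -> {morph f : x y / x - y}.
Proof. by move=> fD x y; apply: (addIr (f y)); rewrite -fD !subrK. Qed.

Definition additive_of (M : zmodType) (f : M -> M) (fD : {morph f : x y / x + y}) :
  {additive M -> M} := HB.pack f (GRing.isZmodMorphism.Build M M f (morph_addB fD)).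

Section IntegerCombinations.
Variable M : zmodType.
Implicit Types (b : seq M) (c : nat -> int) (x y : M).

Definition zcomb b c := \sum_(k < size b) b`_k *~ c k.
Definition zfree b := forall c, zcomb b c = 0 -> forall k, (k < size b)%N -> c k = 0.
Definition zspan b x := exists c, zcomb b c = x.

Lemma eq_zcomb b c1 c2 :
  (forall k, (k < size b)%N -> c1 k = c2 k) -> zcomb b c1 = zcomb b c2.
Proof. by move=> eq_c; apply: eq_bigr => k _; rewrite eq_c. Qed.

Lemma zcomb0 b : zcomb b (fun=> 0) = 0.
Proof. by rewrite /zcomb big1 // => k _; rewrite mulr0z. Qed.

Lemma zcombN b c : zcomb b (fun k => - c k) = - zcomb b c.
Proof. by rewrite /zcomb -sumrN; apply: eq_bigr => k _; rewrite mulrNz. Qed.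

Lemma zcombZ b c z : zcomb b (fun k => c k * z) = zcomb b c *~ z.
Proof. by rewrite /zcomb mulrz_suml; apply: eq_bigr => k _; rewrite mulrzA. Qed.

Lemma zcomb_rcons b a c : zcomb (rcons b a) c = zcomb b c + a *~ c (size b).
Proof.
rewrite /zcomb size_rcons big_ord_recr /= nth_rcons ltnn eqxx; congr (_ + _).
by apply: eq_bigr => k _; rewrite nth_rcons ltn_ord.
Qed.

Lemma zspanMz b x z : zspan b x -> zspan b (x *~ z).
Proof. by move=> [c <-]; exists (fun k => c k * z); rewrite zcombZ. Qed.

Lemma zspanMn b x n : zspan b x -> zspan b (x *+ n).
Proof. by rewrite pmulrn; apply: zspanMz. Qed.

Lemma zspan_sum b n (F : 'I_n -> M) : (forall k, zspan b (F k)) -> zspan b (\sum_k F k).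
Proof.
move=> spanF; elim/big_ind: _ => //; first by exists (fun=> 0); rewrite zcomb0.
move=> x y [c1 <-] [c2 <-]; exists (fun k => c1 k + c2 k).
by rewrite /zcomb -big_split; apply: eq_bigr => k _; rewrite mulrzDr.
Qed.

Lemma zfree_rcons b a : zfree b ->
  zfree (rcons b a) \/ exists2 g, (0 < g)%N & zspan b (a *+ g).
Proof.
move=> b_free; have [|/not_all_ex_not [c]] := classic (zfree (rcons b a)); first by left.
move=> /not_all_ex_not [c0] /not_all_ex_not [k] /not_all_ex_not [lt_k ck_neq0].
have c_size_neq0 : c (size b) != 0.
  apply: contra_notN ck_neq0 => /eqP cb0.
  move: lt_k; rewrite size_rcons ltnS leq_eqVlt => /orP [/eqP -> //|lt_k].
  by apply: b_free lt_k; move: c0; rewrite zcomb_rcons cb0 mulr0z addr0.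
right; exists `|c (size b)|%N; first by rewrite absz_gt0.
have ac : zspan b (a *~ c (size b)).
  exists (fun k => - c k); rewrite zcombN; apply/eqP.
  by rewrite eq_sym -addr_eq0 addrC -zcomb_rcons c0.
rewrite pmulrn abszE; have [/ger0_norm ->|/ltr0_norm ->] := lerP 0 (c (size b)) => //.
by rewrite -mulrN1 mulrzA; apply: zspanMz.
Qed.

Lemma zfree_span_multiple (l : seq M) : exists2 b, zfree b &
  exists2 e, (0 < e)%N & forall y, y \in l -> zspan b (y *+ e).
Proof.
elim: l => [|a l [b b_free [e e_gt0 span_e]]].
  by exists [::]; [move=> c _ k | exists 1%N].
have span_rcons y : zspan b y -> zspan (rcons b a) y.
  move=> [c <-]; exists (fun k => if (k < size b)%N then c k else 0).
  rewrite zcomb_rcons ltnn mulr0z addr0; by apply: eq_zcomb => k ->.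
case: (zfree_rcons a b_free) => [ba_free|[g g_gt0 span_ag]].
  exists (rcons b a) => //; exists e => // y; rewrite inE => /orP [/eqP ->|yl].
    exists (fun k => if k == size b then e%:Z else 0); rewrite zcomb_rcons eqxx.
    by rewrite (@eq_zcomb _ _ (fun=> 0)) ?zcomb0 ?add0r // => k /ltn_eqF ->.
  exact/span_rcons/span_e.
exists b => //; exists (g * e)%N; first by rewrite muln_gt0 g_gt0.
move=> y; rewrite inE => /orP [/eqP ->|yl]; first by rewrite mulrnA; apply: zspanMn.
by rewrite mulnC mulrnA; apply/zspanMn/span_e.
Qed.

Lemma fin_gen_zfree_span : fin_gen_Zmod M -> exists2 b, zfree b &
  exists2 e, (0 < e)%N & forall x, zspan b (x *+ e).
Proof.
move=> [s gen]; have [b b_free [e e_gt0 span_e]] := zfree_span_multiple s.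
exists b => //; exists e => // x; have [c ->] := gen x.
rewrite -sumrMnl; apply: zspan_sum => k.
by rewrite pmulrn -mulrzA mulrC mulrzA -pmulrn; apply/zspanMz/span_e/mem_nth.
Qed.

End IntegerCombinations.

Lemma mulmxMnl (R : pzRingType) m n p (A : 'M[R]_(m, n)) (B : 'M_(n, p)) k :
  (A *+ k) *m B = (A *m B) *+ k.
Proof. by rewrite -!scaler_nat scalemxAl. Qed.

Section Coordinates.
Variables (M : zmodType) (b : seq M) (e : nat).
Hypotheses (b_free : zfree b) (e_gt0 : (0 < e)%N) (span_e : forall x, zspan b (x *+ e)).
Local Notation d := (size b).

Definition rowcomb (v : 'rV[int]_d) : M := \sum_(k < d) b`_k *~ v 0 k.

Lemma rowcombD v1 v2 : rowcomb (v1 + v2) = rowcomb v1 + rowcomb v2.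
Proof. by rewrite /rowcomb -big_split; apply: eq_bigr => k _; rewrite mxE mulrzDr. Qed.

Lemma rowcombZ z v : rowcomb (z *: v) = rowcomb v *~ z.
Proof. by rewrite /rowcomb mulrz_suml; apply: eq_bigr => k _; rewrite mxE mulrC mulrzA. Qed.

Lemma rowcomb_inj : injective rowcomb.
Proof.
move=> v1 v2 eq_v; apply/rowP => k; apply/eqP; rewrite -subr_eq0.
have /b_free/(_ k (ltn_ord k)) : zcomb b (fun n => oapp ((v1 - v2) 0) 0 (insub n)) = 0.
  transitivity (rowcomb (v1 - v2)); first by apply: eq_bigr => j _; rewrite valK.
  by rewrite -scaleN1r rowcombD rowcombZ eq_v mulrN1z subrr.
by rewrite valK /= !mxE => ->.
Qed.

Lemma coord_exists x : exists v, rowcomb v == x *+ e.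
Proof.
have [c <-] := span_e x; exists (\row_k c k); apply/eqP.
by apply: eq_bigr => k _; rewrite mxE.
Qed.

(* [coord x] holds the coordinates of [x *+ e], not of [x], in [b]; accordingly
   [zmx f] is the matrix of [e f]. *)
Definition coord x := xchoose (coord_exists x).

Lemma rowcomb_coord x : rowcomb (coord x) = x *+ e.
Proof. exact/eqP/(xchooseP (coord_exists x)). Qed.

Lemma coordD : {morph coord : x y / x + y}.
Proof. by move=> x y; apply: rowcomb_inj; rewrite rowcombD !rowcomb_coord mulrnDl. Qed.

Lemma coord0 : coord 0 = 0.
Proof. by apply: (addIr (coord 0)); rewrite -coordD !add0r. Qed.

Lemma coordMz x z : coord (x *~ z) = z *: coord x.
Proof. by apply: rowcomb_inj; rewrite rowcombZ !rowcomb_coord !pmulrn mulrzAC. Qed.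

Lemma coordMn x n : coord (x *+ n) = coord x *+ n.
Proof. by rewrite !pmulrn coordMz -scaler_int intz. Qed.

Lemma coord_sum n (F : 'I_n -> M) : coord (\sum_k F k) = \sum_k coord (F k).
Proof. exact: (big_morph _ coordD coord0). Qed.

Lemma coord_eq x y : coord x = coord y -> x *+ e = y *+ e.
Proof. by rewrite -!rowcomb_coord => ->. Qed.

Lemma coord_nth (j : 'I_d) : coord b`_j = delta_mx 0 j *+ e.
Proof.
apply: rowcomb_inj; rewrite rowcomb_coord -scaler_nat natz rowcombZ pmulrn.
congr (_ *~ _); rewrite /rowcomb (bigD1 j) //= big1 ?addr0; first by rewrite mxE !eqxx.
by move=> k kj; rewrite mxE (negbTE kj) andbF mulr0z.
Qed.

Lemma coord_mulmxI (A B : 'M[int]_d) : (forall x, coord x *m A = coord x *m B) -> A = B.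
Proof.
move=> eqAB; apply/row_matrixP => j; apply: (@scalemx_inj _ _ _ e%:R).
  by rewrite pnatr_eq0 -lt0n.
by rewrite !rowE !scalemxAl !scaler_nat -coord_nth eqAB.
Qed.

Definition zmx (f : M -> M) : 'M[int]_d := \matrix_(j, k) coord (f b`_j) 0 k.

Lemma coord_zmx (f : {additive M -> M}) x : coord (f x) *+ e = coord x *m zmx f.
Proof.
rewrite -coordMn -raddfMn -rowcomb_coord /rowcomb raddf_sum coord_sum.
apply/rowP => j; rewrite !mxE summxE; apply: eq_bigr => k _.
by rewrite raddfMz coordMz !mxE mulrC.
Qed.

Lemma coord_iter_zmx (f : {additive M -> M}) r x :
  coord (iter r f x) *+ (e ^ r) = coord x *m zmx f ^+ r.
Proof.
elim: r x => [|r IH] x; first by rewrite expr0 mulmx1.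
by rewrite iterSr expnSr mulrnA IH -mulmxMnl coord_zmx -mulmxA mulmxE -exprS.
Qed.

Lemma zmx_iter (f g : {additive M -> M}) r :
  iter r g =1 f -> e%:R *: zmx g ^+ r = (e ^ r)%:R *: zmx f.
Proof.
move=> gf; apply: coord_mulmxI => x.
by rewrite -!scalemxAr -coord_iter_zmx -coord_zmx gf !scaler_nat -!mulrnA mulnC.
Qed.

Lemma det_zmx_neq0 (f : {additive M -> M}) : bijective f -> \det (zmx f) != 0.
Proof.
case=> g fK gK; have gD : {morph g : x y / x + y}.
  by move=> x y; apply: (can_inj fK); rewrite raddfD !gK.
have zmx_fg : zmx f *m zmx (additive_of gD) = (e ^ 2)%:R%:M.
  apply: coord_mulmxI => x.
  rewrite mulmxA -!coord_zmx mulmxMnl -coord_zmx /= fK.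
  by rewrite mul_mx_scalar scaler_nat -mulrnA mulnn.
have : (e ^ 2)%:R ^+ d != 0 :> int by rewrite expf_neq0 // pnatr_eq0 -lt0n expn_gt0 e_gt0.
by rewrite -det_scalar -zmx_fg det_mulmx mulf_eq0 negb_or => /andP [].
Qed.

Lemma iter_zmx_scalar (f : {additive M -> M}) m :
  zmx f ^+ m = (e ^ m)%:R%:M -> forall x, (iter m f x - x) *+ e = 0.
Proof.
move=> fm x; apply/eqP; rewrite mulrnBl subr_eq0; apply/eqP/coord_eq.
apply: (@scalemx_inj _ _ _ (e ^ m)%:R); first by rewrite pnatr_eq0 -lt0n expn_gt0 e_gt0.
by rewrite !scaler_nat coord_iter_zmx fm mul_mx_scalar scaler_nat.
Qed.

Lemma etorsion_eq0 (t y : M) : t *+ e = 0 -> t = y *+ e -> t = 0.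
Proof.
move=> te ty; have rowcomb0 : rowcomb 0 = 0.
  by rewrite -(scale0r (0 : 'rV_d)) rowcombZ mulr0z.
have : (e%:R : int) *: coord y = 0.
  by apply: rowcomb_inj; rewrite rowcomb0 rowcombZ rowcomb_coord natz -pmulrn -ty te.
move/eqP; rewrite scalemx_eq0 pnatr_eq0 (gtn_eqF e_gt0) /= => /eqP y0.
by rewrite ty -rowcomb_coord y0 rowcomb0.
Qed.

End Coordinates.

Lemma iter_additive (M : zmodType) (f : {additive M -> M}) n :
  {morph iter n f : x y / x + y}.
Proof. by elim: n => // n IH x y; rewrite !iterS IH raddfD. Qed.

Lemma iter_inj (T : Type) (f : T -> T) n : injective f -> injective (iter n f).
Proof. by move=> f_inj; elim: n => // n IH x y /= /f_inj /IH. Qed.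

Lemma iter_fact_fixed (T : Type) (F : finType) (S : T -> Prop) (code : T -> F)
    (g : T -> T) :
  injective g -> (forall t, S t -> S (g t)) ->
  (forall t1 t2, S t1 -> S t2 -> code t1 = code t2 -> t1 = t2) ->
  forall t, S t -> iter #|F|`! g t = t.
Proof.
move=> g_inj gS code_inj t St.
have S_iter k : S (iter k g t) by elim: k => //= k /gS.
have [p /andP [p_gt0 le_pF] gpt] : exists2 p, (0 < p <= #|F|)%N & iter p g t = t.
  pose c (j : 'I_#|F|.+1) := code (iter j g t).
  have /injectivePn [j1 [j2 neq_j cj]] : ~~ injectiveb c.
    by apply/injectiveP => /leq_card; rewrite card_ord ltnn.
  wlog lt_j : j1 j2 neq_j cj / (j1 < j2)%N.
    move=> W; have [|lt_j|/val_inj eq_j] := ltngtP j1 j2; first exact: W.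
      by apply: (W j2 j1) => //; rewrite eq_sym.
    by rewrite eq_j eqxx in neq_j.
  exists (j2 - j1)%N; first by rewrite subn_gt0 lt_j -ltnS (leq_ltn_trans (leq_subr _ _)).
  apply: (@iter_inj _ _ j1 g_inj); rewrite -iterD subnKC ?(ltnW lt_j) //.
  exact/esym/code_inj.
have /dvdnP [q ->] : (p %| #|F|`!)%N by rewrite dvdn_fact // p_gt0.
by elim: q => // q IH; rewrite mulSn iterD IH gpt.
Qed.

Lemma iter_fixed_torsion_id (M : zmodType) (f : {additive M -> M}) (e q : nat) :
  (forall x, (f x - x) *+ e = 0) -> (forall t, t *+ e = 0 -> iter q f t = t) ->
  forall x, iter (q * e) f x = x.
Proof.
move=> f_unip fix_tors x.
have iter_tors k y : (iter k f y - y) *+ e = 0.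
  elim: k => [|k IH]; first by rewrite subrr mul0rn.
  by rewrite iterS -(subrK (iter k f y) (f _)) -addrA mulrnDl f_unip IH addr0.
set D := iter q f x - x.
suff -> k : iter (q * k) f x = x + D *+ k by rewrite iter_tors addr0.
elim: k => [|k IH]; first by rewrite muln0 mulr0n addr0.
rewrite mulnS iterD IH (iter_additive f q) (fix_tors (D *+ k)).
  by rewrite mulrS addrA [x + D]addrC subrK.
by rewrite -mulrnA mulnC mulrnA iter_tors mul0rn.
Qed.

Section Torsion.
Variables (M : zmodType) (s b : seq M) (e : nat).
Hypotheses (gen : forall x, zspan s x) (b_free : zfree b) (e_gt0 : (0 < e)%N).
Hypothesis span_e : forall x, zspan b (x *+ e).

Lemma zrep_exists x :
  exists c : {ffun 'I_(size s) -> int}, x == \sum_(i < size s) s`_i *~ c i.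
Proof.
have [c <-] := gen x; exists [ffun i : 'I_(size s) => c i]; apply/eqP.
by apply: eq_bigr => i _; rewrite ffunE.
Qed.

Definition zrep x := xchoose (zrep_exists x).

Lemma zrepP x : x = \sum_(i < size s) s`_i *~ zrep x i.
Proof. exact/eqP/(xchooseP (zrep_exists x)). Qed.

Definition residue_code x : {ffun 'I_(size s) -> 'I_e.+1} :=
  [ffun i => inord (absz (zrep x i %% e%:Z)%Z)].

(* Equal residues make [t1 - t2] an [e]-torsion element of [e M]. *)
Lemma residue_code_inj t1 t2 : t1 *+ e = 0 -> t2 *+ e = 0 ->
  residue_code t1 = residue_code t2 -> t1 = t2.
Proof.
move=> t1e t2e eq_code; apply/eqP; rewrite -subr_eq0; apply/eqP.
have e_neq0 : e%:Z != 0 by rewrite eqz_nat -lt0n.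
have eq_mod i : (zrep t1 i %% e%:Z)%Z = (zrep t2 i %% e%:Z)%Z.
  have lt_res z : (absz (z %% e%:Z)%Z < e.+1)%N.
    by rewrite ltnS ltnW // -ltz_nat gez0_abs ?modz_ge0 ?ltz_pmod ?ltz_nat.
  have /eqP := congr1 (fun c : {ffun _ -> 'I_e.+1} => (c i : nat)) eq_code.
  by rewrite !ffunE /= !inordK // -eqz_nat !gez0_abs ?modz_ge0 // => /eqP.
pose y := \sum_(i < size s) s`_i *~ ((zrep t1 i %/ e%:Z)%Z - (zrep t2 i %/ e%:Z)%Z).
apply: (etorsion_eq0 b_free e_gt0 span_e (y := y)); first by rewrite mulrnBl t1e t2e subrr.
rewrite {1}(zrepP t1) {1}(zrepP t2) -sumrB -sumrMnl; apply: eq_bigr => i _.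
rewrite -mulrzBr pmulrn -mulrzA; congr (_ *~ _).
by rewrite {1}(divz_eq (zrep t1 i) e%:Z) {1}(divz_eq (zrep t2 i) e%:Z) eq_mod; ring.
Qed.

Lemma finite_order_of_unipotent_mod_torsion (f : {additive M -> M}) m :
  injective f -> (0 < m)%N -> (forall x, (iter m f x - x) *+ e = 0) ->
  exists2 n, (0 < n)%N & iter n f =1 id.
Proof.
move=> f_inj m_gt0 f_unip; pose g := additive_of (iter_additive f m).
pose q := #|{ffun 'I_(size s) -> 'I_e.+1}|`!.
exists (q * e * m)%N; first by rewrite !muln_gt0 fact_gt0 e_gt0.
move=> x; rewrite iterM; apply: (@iter_fixed_torsion_id _ g) => // t te.
apply: (iter_fact_fixed (S := fun t => t *+ e = 0) (code := residue_code)) => //.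
- exact: iter_inj.
- by move=> u ue; rewrite -raddfMn ue raddf0.
- exact: residue_code_inj.
Qed.

End Torsion.

Theorem theorem3p9 (M : zmodType) (z : M -> M) (r : nat -> nat)
  (w : nat -> M -> M) :
  fin_gen_Zmod M ->
  Zmod_aut z ->
  tends_to_infty r ->
  (forall i, Zmod_aut (w i)) ->
  (forall i, iter (r i) (w i) =1 z) ->
  exists n : nat, (0 < n)%N /\ iter n z =1 id.
Proof.
move=> genM [zD z_bij] r_infty w_aut wz.
have [b b_free [e e_gt0 span_e]] := fin_gen_zfree_span genM.
pose za := additive_of zD; pose wa i := additive_of (w_aut i).1.
have [m m_gt0 Zm] := int_mx_root_scalar_power e_gt0
  (det_zmx_neq0 b_free e_gt0 span_e (f := za) z_bij)
  (fun i => zmx_iter b_free e_gt0 span_e (f := za) (g := wa i) (wz i))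
  (tends_to_infty_unbounded r_infty).
have [s s_gen] := genM; have gen x : zspan s x by have [c ->] := s_gen x; exists c.
have [n n_gt0 zn] := finite_order_of_unipotent_mod_torsion gen b_free e_gt0 span_e (f := za)
  (bij_inj z_bij) m_gt0 (iter_zmx_scalar b_free e_gt0 Zm).
by exists n.
Qed.
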